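(* Let $0<\eta\leq1$ be real and $d\geq1$ an integer. Let $F$ be a 3-graph and $A,B\subseteq V(F)$ with $A\cap B=\emptyset$, $|A|\geq 4d\,e^d/\eta^d$ and $|B|\geq d/\eta$. Assume that $A$ induces a clique in $F$ and $d(A,A,B)\geq\eta$. Then $F$ contains a tight path of the form $a_1a_2b_1a_3a_4b_2\dots a_{2d-1}a_{2d}b_da_{2d+1}a_{2d+2}$ with distinct vertices $a_i\in A$ ($i\in[2d+2]$) and $b_j\in B$ ($j\in[d]$).
   Context: A 3-graph is a 3-uniform hypergraph. A tight path with vertex sequence $v_1v_2\dots v_s$ has edges $\{v_i,v_{i+1},v_{i+2}\}$ for $i\in[s-2]$. For $A,B,C\subseteq V(F)$, $E(A,B,C)$ is the set of ordered triples $(a,b,c)\in A\times B\times C$ of distinct vertices with $abc\in E(F)$, and $d(A,B,C)=|E(A,B,C)|$ divided by the number of ordered triples of distinct vertices in $A\times B\times C$. *)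

From mathcomp Require Import all_boot all_order all_algebra.
From mathcomp Require Import all_classical all_reals all_analysis.
Set Implicit Arguments. Unset Strict Implicit. Unset Printing Implicit Defensive.
Import Order.TTheory GRing.Theory Num.Theory.

Definition is_3graph (T : finType) (E : {set {set T}}) : Prop :=
  forall e, e \in E -> #|e| = 3%N.

Definition is_clique3 (T : finType) (E : {set {set T}}) (A : {set T}) : Prop :=
  forall x y z, x \in A -> y \in A -> z \in A ->
    x != y -> y != z -> x != z -> [set x; y; z] \in E.

Definition edge_triples (T : finType) (E : {set {set T}}) (A B C : {set T}) :
  {set T * T * T} :=
  [set t : T * T * T | [&& t.1.1 \in A, t.1.2 \in B, t.2 \in C,
     t.1.1 != t.1.2, t.1.2 != t.2, t.1.1 != t.2 &
     [set t.1.1; t.1.2; t.2] \in E]].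

Definition dist_triples (T : finType) (A B C : {set T}) : {set T * T * T} :=
  [set t : T * T * T | [&& t.1.1 \in A, t.1.2 \in B, t.2 \in C,
     t.1.1 != t.1.2, t.1.2 != t.2 & t.1.1 != t.2]].

Definition density (R : realType) (T : finType) (E : {set {set T}})
  (A B C : {set T}) : R :=
  (#|edge_triples E A B C|%:R / #|dist_triples A B C|%:R)%R.

Definition tight_path (T : finType) (E : {set {set T}}) (s : seq T) : Prop :=
  uniq s /\
  forall (x0 : T) (i : nat), (i + 2 < size s)%N ->
    [set nth x0 s i; nth x0 s i.+1; nth x0 s i.+2] \in E.

(* The vertex sequence a_1 a_2 b_1 a_3 a_4 b_2 ... a_{2d-1} a_{2d} b_d a_{2d+1} a_{2d+2}
   (0-indexed: a 0, a 1, b 0, a 2, a 3, b 1, ..., a (2d), a (2d+1)). *)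
Definition ab_pattern (T : Type) (d : nat) (a : nat -> T) (b : nat -> T) : seq T :=
  flatten [seq [:: a (2 * j)%N; a (2 * j).+1; b j] | j <- iota 0 d]
    ++ [:: a (2 * d)%N; a (2 * d).+1].

From mathcomp Require Import all_boot all_order all_algebra.
From mathcomp Require Import all_classical all_reals all_analysis.
From mathcomp Require Import zify ring lra.
Import Order.TTheory GRing.Theory Num.Theory.

Set Implicit Arguments.
Unset Strict Implicit.
Unset Printing Implicit Defensive.

(* Let N(p) ⊆ B be the link of an ordered pair p of distinct vertices of A.
   The density hypothesis says that the |N(p)| average at least ηm (m = |B|),
   so by convexity of j ↦ C(j, d) and averaging over the d-subsets of B, some
   d-set S ⊆ B lies in the links of at least |A|(|A|-1) C(ηm, d) / C(m, d)
   pairs; with |A| ≥ 4d e^d / η^d these pairs form a graph on A with more than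
   4d|A| arcs.  Such a graph has a subgraph of minimum degree > 2d, hence a path
   a_1 ... a_{2d+2}, and inserting the elements b_1, ..., b_d of S between
   a_2, a_3, then a_4, a_5, ... gives the tight path: each of its triples is
   {a_i, a_{i+1}, b_j}. *)

Section ConvexJensen.

Variable f : nat -> nat.
Hypothesis f_homo : {homo f : i j / (i <= j)%N}.
Hypothesis f_incr_homo : {homo (fun i => f i.+1 - f i) : i j / (i <= j)%N}.

Lemma convex_tangent_nat t k :
  f t + k * (f t.+1 - f t) <= f k + t * (f t.+1 - f t).
Proof.
set D := f t.+1 - f t.
have [tk | kt] := leqP t k.
- have incr : (k - t) * D <= f k - f t.
    rewrite -(telescope_sumn _ _ f_homo) -sum_nat_const_nat.
    rewrite big_nat_cond [X in _ <= X]big_nat_cond.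
    by apply: leq_sum => l /andP[/andP[tl _] _]; apply: f_incr_homo.
  have := f_homo tk; rewrite mulnBl in incr; lia.
- have incr : f t - f k <= (t - k) * D.
    rewrite -(telescope_sumn _ _ f_homo) -sum_nat_const_nat.
    rewrite big_nat_cond [X in _ <= X]big_nat_cond.
    by apply: leq_sum => l /andP[/andP[_ lt] _]; apply: f_incr_homo; apply: ltnW.
  have kDt : k * D <= t * D by rewrite leq_mul2r ltnW ?orbT.
  have := f_homo (ltnW kt); rewrite mulnBl in incr; lia.
Qed.

Lemma convex_jensen_nat (I : finType) (P : {set I}) (x : I -> nat) t :
  #|P| * t <= \sum_(i in P) x i -> #|P| * f t <= \sum_(i in P) f (x i).
Proof.
move=> avg; set D := f t.+1 - f t.
have tangent : \sum_(i in P) (f t + x i * D) <= \sum_(i in P) (f (x i) + t * D).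
  by apply: leq_sum => i _; apply: convex_tangent_nat.
rewrite !big_split /= !sum_nat_const -big_distrl /= in tangent.
have avgD : #|P| * (t * D) <= (\sum_(i in P) x i) * D by rewrite mulnA leq_mul2r avg orbT.
lia.
Qed.

End ConvexJensen.

Lemma jensen_bin (I : finType) (P : {set I}) (x : I -> nat) t d :
  #|P| * t <= \sum_(i in P) x i -> #|P| * 'C(t, d) <= \sum_(i in P) 'C(x i, d).
Proof.
apply: (@convex_jensen_nat (fun j => 'C(j, d))) => [i j|i j ij]; first exact: leq_bin2l.
by case: d => [|d]; rewrite ?bin0 ?subnn // !binS !addKn leq_bin2l.
Qed.

Lemma expn_prod_ord m d : m ^ d = \prod_(i < d) m.
Proof. by rewrite prod_nat_const card_ord. Qed.

Lemma ffact_le_expn m d : m ^_ d <= m ^ d.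
Proof. by rewrite ffact_prod expn_prod_ord; apply: leq_prod => i _; apply: leq_subr. Qed.

Lemma expnS_le_bin_expn t d : d <= t -> t.+1 ^ d <= 'C(t, d) * d.+1 ^ d.
Proof.
move=> dt; rewrite -(leq_pmul2l (fact_gt0 d)) mulnA [d`! * 'C(t, d)]mulnC bin_ffact.
rewrite -ffactnn !ffact_prod !expn_prod_ord -!big_split /=.
by apply: leq_prod => i _; have := ltn_ord i; nia.
Qed.

Lemma exists_column_ge_average (I J : finType) (P : {set I}) (Q : {set J})
    (r : I -> J -> bool) :
  (0 < #|Q|)%N ->
  exists2 y, y \in Q &
    \sum_(x in P) #|[set y in Q | r x y]| <= #|Q| * #|[set x in P | r x y]|.
Proof.
case/card_gt0P=> y1 y1Q; pose col y := #|[set x in P | r x y]|.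
have [y0 y0Q col_max] := @arg_maxnP _ y1 [pred y | y \in Q] col y1Q.
exists y0 => //.
have -> : \sum_(x in P) #|[set y in Q | r x y]| = \sum_(y in Q) col y.
  rewrite (eq_bigr (fun x => \sum_(y in Q | r x y) 1)) => [|x _]; last first.
    by rewrite sum1dep_card.
  rewrite (exchange_big_dep (mem Q)) /= => [|x y _ /andP[] //].
  apply: eq_bigr => y yQ; rewrite sum1dep_card; apply: eq_card => x.
  by rewrite !inE yQ.
by rewrite -sum_nat_const; apply: leq_sum => y yQ; apply: col_max.
Qed.

Section MinDegree.

Variables (X : finType) (G : rel X).
Hypothesis G_sym : symmetric G.

Definition arcs_in (V : {set X}) : {set X * X} :=
  [set p | [&& p.1 \in V, p.2 \in V & G p.1 p.2]].

Definition nbr_in (V : {set X}) (x : X) : {set X} := [set y in V | G x y].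

Lemma in_nbr_in V x y : (y \in nbr_in V x) = (y \in V) && G x y.
Proof. by rewrite inE. Qed.

Lemma card_arcs_in_setD1 (V : {set X}) v :
  #|arcs_in V| <= #|arcs_in (V :\ v)| + 2 * #|nbr_in V v|.
Proof.
pose out := [set (v, y) | y in nbr_in V v].
pose inc := [set (x, v) | x in nbr_in V v].
have arcs_sub : arcs_in V \subset arcs_in (V :\ v) :|: (out :|: inc).
  apply/fintype.subsetP => -[x y]; rewrite !inE /= => /and3P[xV yV Gxy].
  have [? | _] := eqVneq x v.
    subst x; apply/orP; right; apply/orP; left; apply/imsetP; exists y => //.
    by rewrite in_nbr_in yV.
  have [? | _] := eqVneq y v.
    subst y; apply/orP; right; apply/orP; right; apply/imsetP; exists x => //.
    by rewrite in_nbr_in xV G_sym.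
  by rewrite xV yV Gxy.
apply: leq_trans (subset_leq_card arcs_sub) _.
apply: leq_trans (leq_card_setU _ _) _; rewrite leq_add2l mul2n -addnn.
apply: leq_trans (leq_card_setU _ _) _.
by apply: leq_add; apply: leq_imset_card.
Qed.

Lemma exists_min_degree_subset c (V : {set X}) :
  2 * c * #|V| < #|arcs_in V| ->
  exists W : {set X}, [/\ W \subset V, 0 < #|W| & {in W, forall v, c < #|nbr_in W v|}].
Proof.
move=> V_dense.
pose dense (W : {set X}) := (W \subset V) && (2 * c * #|W| < #|arcs_in W|).
have [W /andP[WV W_dense] W_min] := @arg_minnP _ V dense (fun W : {set X} => #|W|)
  (introT andP (conj (subxx V) V_dense)).
exists W; split => // [|v vW].
  have [[x y]] := card_gt0P (leq_ltn_trans (leq0n _) W_dense).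
  by rewrite inE => /and3P[xW _ _]; apply/card_gt0P; exists x.
rewrite ltnNge; apply/negP => low_deg.
have Wv_dense : dense (W :\ v).
  rewrite /dense (fintype.subset_trans (subsetDl W [set v]) WV) /=.
  rewrite -(ltn_add2l (2 * c)) -mulnS.
  have -> : #|W :\ v|.+1 = #|W| by rewrite (cardsD1 v W) vW.
  apply: (leq_trans W_dense); apply: (leq_trans (card_arcs_in_setD1 W v)).
  by rewrite [X in _ <= X]addnC leq_add2l leq_mul2l low_deg orbT.
by have := W_min _ Wv_dense; rewrite (cardsD1 v W) vW ltnn.
Qed.

Hypothesis G_irr : irreflexive G.

Lemma exists_path_in_min_degree_subset c (W : {set X}) L :
  0 < #|W| -> {in W, forall v, c < #|nbr_in W v|} -> L <= c.+1 ->
  exists x s, [/\ size s = L, uniq (x :: s), {subset x :: s <= W} & path G x s].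
Proof.
move=> /card_gt0P[w wW] W_deg; elim: L => [|L IH] L_le.
  by exists w, [::]; split => // y; rewrite inE => /eqP->.
have [x [s [size_s uniq_xs xsW path_xs]]] := IH (ltnW L_le).
have [y y_nbr y_new] : exists2 y, y \in nbr_in W x & y \notin s.
  apply/exists_inP; rewrite -negb_forall_in; apply/negP => /forall_inP nbr_sub.
  have : #|nbr_in W x| <= size s.
    apply: leq_trans (card_size s); apply: subset_leq_card.
    by apply/fintype.subsetP => y /nbr_sub.
  by rewrite size_s leqNgt (leq_trans L_le) // W_deg // xsW // mem_head.
move: y_nbr; rewrite inE => /andP[yW Gxy].
exists y, (x :: s); split.
- by rewrite /= size_s.
- rewrite cons_uniq uniq_xs in_cons negb_or y_new !andbT.
  by apply: contraTneq Gxy => ->; rewrite G_irr.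
- by move=> z; rewrite inE => /predU1P[-> // | /xsW].
- by rewrite /= G_sym Gxy.
Qed.

End MinDegree.

Section ABPattern.

Variables (T : eqType) (a b : nat -> T).

Definition pattern_at (i : nat) : T :=
  if i %% 3 == 2 then b (i %/ 3) else a (2 * (i %/ 3) + i %% 3).

Lemma pattern_at_block j :
  [/\ pattern_at (3 * j) = a (2 * j), pattern_at (3 * j).+1 = a (2 * j).+1
    & pattern_at (3 * j).+2 = b j].
Proof.
rewrite /pattern_at.
have -> : (3 * j) %% 3 = 0 by lia. have -> : (3 * j).+1 %% 3 = 1 by lia.
have -> : (3 * j).+2 %% 3 = 2 by lia.
have -> : (3 * j) %/ 3 = j by lia. have -> : (3 * j).+1 %/ 3 = j by lia.
have -> : (3 * j).+2 %/ 3 = j by lia.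
by rewrite addn0 addn1.
Qed.

Let block j := [:: a (2 * j); a (2 * j).+1; b j].
Let blocks d := flatten (mkseq block d).

Lemma blocks_mkseq d : blocks d = mkseq pattern_at (3 * d).
Proof.
elim: d => [|d IH] //; rewrite /blocks mkseqS flatten_rcons -/(blocks d) IH.
have [p0 p1 p2] := pattern_at_block d.
by rewrite mulnSr addn3 !mkseqS p0 p1 p2 -!cats1 -!catA.
Qed.

Lemma ab_pattern_mkseq d : ab_pattern d a b = mkseq pattern_at (3 * d + 2).
Proof.
have [p0 p1 _] := pattern_at_block d.
by rewrite /ab_pattern -/(blocks d) blocks_mkseq addn2 !mkseqS p0 p1 -!cats1 -!catA.
Qed.

Lemma perm_blocks d : perm_eq (blocks d) (mkseq a (2 * d) ++ mkseq b d).
Proof.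
elim: d => [|d IH] //; rewrite /blocks mkseqS flatten_rcons -/(blocks d).
rewrite mulnSr addn2 !mkseqS -!cats1 -!catA.
apply: perm_trans (perm_cat IH (perm_refl (block d))) _.
by rewrite -catA perm_cat2l perm_sym catA perm_catCA.
Qed.

Lemma perm_ab_pattern d :
  perm_eq (ab_pattern d a b) (mkseq a (2 * d + 2) ++ mkseq b d).
Proof.
rewrite /ab_pattern -/(blocks d) addn2 !mkseqS -!cats1 -!catA.
apply: perm_trans (perm_cat (perm_blocks d) (perm_refl _)) _.
by rewrite -catA perm_cat2l perm_catC.
Qed.

End ABPattern.

Lemma set3C23 (T : finType) (x y z : T) : [set x; y; z] = [set x; z; y].
Proof. by rewrite finset.setUAC. Qed.

Lemma set3C12 (T : finType) (x y z : T) : [set x; y; z] = [set y; x; z].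
Proof. by rewrite [[set x; y]]finset.setUC. Qed.

Lemma tight_path_ab_pattern (T : finType) (E : {set {set T}}) d (a b : nat -> T) :
  uniq (mkseq a (2 * d + 2) ++ mkseq b d) ->
  (forall x j, x < 2 * d + 1 -> j < d -> [set a x; a x.+1; b j] \in E) ->
  tight_path E (ab_pattern d a b).
Proof.
move=> uniq_ab edge_ab; split; first by rewrite (perm_uniq (perm_ab_pattern a b d)).
move=> x0 i; rewrite ab_pattern_mkseq size_mkseq => i_lt.
rewrite !nth_mkseq; [|lia|lia|lia].
have q_lt : i %/ 3 < d by lia.
set q := i %/ 3 in q_lt *.
have [p0 p1 p2] := pattern_at_block a b q.
have [p3 p4 _] := pattern_at_block a b q.+1.
rewrite !mulnSr addn3 addn2 in p3 p4.
(* With i = 3q + r, the window at i is {a (2q + r), a (2q + r).+1, b q}. *)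
move: (divn_eq i 3) (ltn_pmod i (isT : 0 < 3)); rewrite mulnC -/q.
case: (i %% 3) => [|[|[|//]]] -> _; rewrite ?addn0 ?addn1 ?addn2.
- by rewrite p0 p1 p2 edge_ab //; lia.
- by rewrite p1 p2 p3 set3C23 edge_ab //; lia.
- by rewrite p2 p3 p4 set3C12 set3C23 edge_ab //; lia.
Qed.

Local Open Scope ring_scope.

Section RealBounds.

Variable R : realType.

Lemma expR1_ge9_4 : 9 / 4 <= expR 1 :> R.
Proof.
have -> : expR 1 = expR 2^-1 ^+ 2 :> R by rewrite -expRM_natl mulfV.
have -> : 9 / 4 = (1 + 2^-1) ^+ 2 :> R by field.
by apply: lerXn2r; rewrite ?nnegrE ?expR_ge0 ?expR_ge1Dx // addr_ge0 // invr_ge0.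
Qed.

Lemma succ_pow_le_expR k : (0 < k)%N -> k.+1%:R ^+ k <= k%:R ^+ k * expR 1 :> R.
Proof.
move=> k_gt0; have k_pos : (0 : R) < k%:R by rewrite ltr0n.
have -> : k.+1%:R = k%:R * (1 + k%:R^-1) :> R.
  by rewrite mulrDr mulr1 mulfV ?gt_eqF // -natr1.
have -> : expR 1 = expR k%:R^-1 ^+ k :> R by rewrite -expRM_natl mulfV ?lt0r_neq0.
rewrite exprMn ler_pM2l ?exprn_gt0 //.
by apply: lerXn2r; rewrite ?nnegrE ?expR_ge0 ?expR_ge1Dx.
Qed.

Lemma succ_pow_le_fact_expR d :
  d.+2%:R ^+ d.+1 <= 2 * (d.+1)`!%:R * expR 1 ^+ d :> R.
Proof.
elim: d => [|d IH]; first by rewrite expr1 expr0 !mulr1.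
apply: (le_trans (succ_pow_le_expR (ltn0Sn d.+1))).
have -> : 2 * (d.+2)`!%:R * expR 1 ^+ d.+1 =
          2 * (d.+1)`!%:R * expR 1 ^+ d * (d.+2%:R * expR 1) :> R.
  by rewrite factS natrM exprS; ring.
have -> : d.+2%:R ^+ d.+2 * expR 1 = d.+2%:R ^+ d.+1 * (d.+2%:R * expR 1) :> R.
  by rewrite exprS; ring.
by apply: ler_wpM2r IH; rewrite mulr_ge0 ?expR_ge0.
Qed.

End RealBounds.

Section CountBound.

Variables (R : realType) (eta : R) (d n : nat).
Hypotheses (eta_gt0 : 0 < eta) (eta_le1 : eta <= 1) (d_gt0 : (0 < d)%N).
Hypothesis n_large : 4 * d%:R * expR 1 ^+ d <= n%:R * eta ^+ d.

Lemma large_card_ge9 : (9 <= n)%N.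
Proof.
have e_ge := @expR1_ge9_4 R.
have e_le_ed : expR 1 <= expR 1 ^+ d :> R by rewrite ler_eXnr //; lra.
have ed_le : expR 1 ^+ d <= d%:R * expR 1 ^+ d :> R.
  by rewrite ler_peMl ?exprn_ge0 ?expR_ge0 // ler1n.
have n_ge : n%:R * eta ^+ d <= n%:R :> R.
  by rewrite ler_piMr // exprn_ile1 // ltW.
rewrite -(ler_nat R); apply: le_trans n_ge; apply: le_trans n_large.
rewrite -mulrA; lra.
Qed.

Lemma large_card_bound :
  4 * d%:R * n%:R * d.+1%:R ^+ d <= n%:R * (n%:R - 1) * d`!%:R * eta ^+ d.
Proof.
have e_ge := @expR1_ge9_4 R.
have n_ge9 : 9 <= n%:R :> R by rewrite (ler_nat R 9) large_card_ge9.
have fact_bd : d.+1%:R ^+ d * expR 1 <= 2 * d`!%:R * expR 1 ^+ d :> R.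
  move: d_gt0; case: (d) => // d' _.
  by rewrite [expR 1 ^+ _]exprSr mulrA ler_wpM2r ?expR_ge0 ?succ_pow_le_fact_expR.
set N := n%:R; set D := d%:R; set P := d.+1%:R ^+ d; set F := d`!%:R.
set Ed := (expR 1 ^+ d : R); set H := eta ^+ d; set e := (expR 1 : R) in e_ge fact_bd *.
have e_gt0 : 0 < e := expR_gt0 1.
have [N_ge0 F_ge0 H_ge0] : [/\ 0 <= N, 0 <= F & 0 <= H].
  by split; rewrite ?ler0n // exprn_ge0 // ltW.
(* After multiplying by e, (d+1)^d e <= 2 d! e^d and 2n <= (n-1) e (from
   n >= 9 and e >= 9/4) turn the hypothesis into the claim. *)
rewrite -(ler_pM2r e_gt0).
apply: le_trans (_ : _ <= 4 * D * N * (2 * F * Ed)) _.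
  by rewrite -[_ * e]mulrA; apply: ler_wpM2l fact_bd; rewrite -!natrM.
apply: le_trans (_ : _ <= 2 * N * F * (N * H)) _.
  have -> : 4 * D * N * (2 * F * Ed) = 2 * N * F * (4 * D * Ed) by ring.
  by apply: ler_wpM2l n_large; rewrite -!natrM.
have -> : 2 * N * F * (N * H) = 2 * N * (N * F * H) by ring.
have -> : N * (N - 1) * F * H * e = (N - 1) * e * (N * F * H) by ring.
by apply: ler_wpM2r; [rewrite !mulr_ge0 | nra].
Qed.

End CountBound.

Lemma truncn_mul_le (R : realType) (eta : R) m :
  0 <= eta -> eta <= 1 -> (Num.truncn (eta * m%:R) <= m)%N.
Proof. by move=> eta_ge0 eta_le1; rewrite truncn_le_nat (le_lt_trans (ler_piMl _ _)) ?ltr_nat. Qed.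

Lemma popular_pairs_gt (R : realType) (eta : R) (d n m g : nat) :
  0 < eta -> eta <= 1 -> (0 < d)%N ->
  4 * d%:R * expR 1 ^+ d <= n%:R * eta ^+ d ->
  (d <= Num.truncn (eta * m%:R))%N ->
  (n * n.-1 * 'C(Num.truncn (eta * m%:R), d) <= 'C(m, d) * g)%N ->
  (4 * d * n < g)%N.
Proof.
move=> eta_gt0 eta_le1 d_gt0 n_large.
set t := Num.truncn (eta * m%:R) => d_le_t popular.
have n_ge9 := large_card_ge9 eta_gt0 eta_le1 d_gt0 n_large.
have m_gt0 : (0 < m)%N.
  exact: leq_trans d_gt0 (leq_trans d_le_t (truncn_mul_le _ (ltW eta_gt0) eta_le1)).
set K := (n * n.-1)%N; set P := (d.+1 ^ d)%N.
(* large_card_bound times m^d, then K d! (eta m)^d < K d! (t+1)^d <= g m^d (d+1)^d. *)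
have count : (K * t.+1 ^ d * d`! <= g * m ^ d * P)%N.
  apply: (@leq_trans (K * ('C(t, d) * P) * d`!)).
    by rewrite leq_mul2r leq_mul2l expnS_le_bin_expn ?orbT.
  apply: (@leq_trans ('C(m, d) * g * P * d`!)).
    by rewrite mulnA !leq_mul2r popular ?orbT.
  have -> : ('C(m, d) * g * P * d`! = g * ('C(m, d) * d`!) * P)%N by ring.
  by rewrite bin_ffact leq_mul2r leq_mul2l ffact_le_expn ?orbT.
have K_eq : K%:R = n%:R * (n%:R - 1) :> R by rewrite natrM -subn1 natrB // (leq_trans _ n_ge9).
have PM_gt0 : (0 : R) < P%:R * m%:R ^+ d by rewrite mulr_gt0 ?exprn_gt0 ?ltr0n ?expn_gt0.
rewrite -(ltr_nat R) -(ltr_pM2r PM_gt0).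
apply: le_lt_trans (_ : _ <= K%:R * d`!%:R * eta ^+ d * m%:R ^+ d) _.
  rewrite mulrA ler_wpM2r ?exprn_ge0 // K_eq !natrM natrX.
  exact: large_card_bound.
apply: lt_le_trans (_ : _ < K%:R * d`!%:R * t.+1%:R ^+ d) _.
  rewrite -mulrA -exprMn ltr_pM2l ?mulr_gt0 ?ltr0n ?fact_gt0 //; last first.
    by rewrite muln_gt0 -subn1 subn_gt0 !(leq_trans _ n_ge9).
  by rewrite ltrXn2r -?lt0n ?nnegrE ?mulr_ge0 ?ltW ?ltr0n ?truncnS_gt.
move: count; rewrite -(ler_nat R) !natrM !natrX.
by rewrite mulrAC [d.+1%:R ^+ d * _]mulrC mulrA.
Qed.

Definition ordered_pairs (T : finType) (A : {set T}) : {set T * T} :=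
  [set p | [&& p.1 \in A, p.2 \in A & p.1 != p.2]].

Lemma card_ordered_pairs (T : finType) (A : {set T}) :
  #|ordered_pairs A| = (#|A| * #|A|.-1)%N.
Proof.
rewrite -sum1dep_card -(pair_big_dep (fun x => x \in A)
  (fun x y => (y \in A) && (x != y)) (fun _ _ => 1%N)) /=.
rewrite -[(#|A| * _)%N]sum_nat_const; apply: eq_bigr => x xA.
rewrite sum1dep_card (cardsD1 x A) xA add1n /=.
by apply: eq_card => y; rewrite !inE andbC eq_sym.
Qed.

Section Links.

Variables (T : finType) (E : {set {set T}}) (A B : {set T}).

Definition link (p : T * T) : {set T} := [set v in B | [set p.1; p.2; v] \in E].

Lemma link_sub p : link p \subset B.
Proof. by apply/fintype.subsetP => v; rewrite inE => /andP[]. Qed.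

Hypothesis AB : [disjoint A & B].

Let neq_AB x v : x \in A -> v \in B -> (x != v) = true.
Proof. by move=> xA vB; apply: contraTneq vB => <-; rewrite (disjointFr AB xA). Qed.

Lemma card_edge_triples_link :
  #|edge_triples E A A B| = (\sum_(p in ordered_pairs A) #|link p|)%N.
Proof.
rewrite (eq_bigr (fun p => \sum_(v | (v \in B) && ([set p.1; p.2; v] \in E)) 1)%N).
  rewrite pair_big_dep sum1dep_card; apply: eq_card => -[[x y] v]; rewrite !inE /=.
  case: (boolP (x \in A)) => //= xA; case: (boolP (y \in A)) => //= yA.
  case: (boolP (v \in B)) => vB; last by rewrite !andbF.
  by rewrite (neq_AB xA vB) (neq_AB yA vB).
by move=> p _; rewrite sum1dep_card.
Qed.

Lemma dist_triples_AAB : dist_triples A A B = finset.setX (ordered_pairs A) B.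
Proof.
apply/setP => -[[x y] v]; rewrite !inE /=.
case: (boolP (x \in A)) => //= xA; case: (boolP (y \in A)) => //= yA.
case: (boolP (v \in B)) => vB; last by rewrite !andbF.
by rewrite (neq_AB xA vB) (neq_AB yA vB) !andbT.
Qed.

Lemma density_link_sum (R : realType) (eta : R) :
  eta <= density R E A A B ->
  #|ordered_pairs A|%:R * (eta * #|B|%:R) <= (\sum_(p in ordered_pairs A) #|link p|)%:R.
Proof.
rewrite /density card_edge_triples_link dist_triples_AAB cardsX natrM.
set PB := _%:R * _%:R; rewrite mulrCA -/PB.
have [PB_gt0 | PB_le0] := ltrP 0 PB; first by rewrite ler_pdivlMr.
(* No distinct triples: the density is 0 / 0 = 0, and so is the left side. *)
have -> : PB = 0 by apply/le_anti; rewrite PB_le0 mulr_ge0.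
by rewrite mulr0.
Qed.

Lemma exists_popular_dset d t :
  (d <= #|B|)%N ->
  (#|ordered_pairs A| * t <= \sum_(p in ordered_pairs A) #|link p|)%N ->
  exists S : {set T}, [/\ S \subset B, #|S| = d &
    (#|ordered_pairs A| * 'C(t, d) <=
       'C(#|B|, d) * #|[set p in ordered_pairs A | S \subset link p]|)%N].
Proof.
move=> d_le_B avg.
pose dsets := [set S : {set T} | S \subset B & #|S| == d].
have card_dsets : #|dsets| = 'C(#|B|, d) := cards_draws B d.
have [|S] := exists_column_ge_average (ordered_pairs A) (fun p (S : {set T}) => S \subset link p)
  (_ : 0 < #|dsets|)%N; first by rewrite card_dsets bin_gt0.
rewrite inE card_dsets => /andP[SB /eqP cardS] popular; exists S; split => //.
apply: leq_trans (jensen_bin d avg) (leq_trans _ popular).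
rewrite leq_eqVlt; apply/orP; left; apply/eqP/eq_bigr => p _.
rewrite -cards_draws; apply: eq_card => S'; rewrite !inE andbC.
case: (boolP (S' \subset link p)) => [S'_sub|]; last by rewrite !andbF.
by rewrite (fintype.subset_trans S'_sub (link_sub p)).
Qed.

Definition link_graph (S : {set T}) : rel T :=
  fun x y => ((x, y) \in ordered_pairs A) && (S \subset link (x, y)).

Lemma link_graph_sym S : symmetric (link_graph S).
Proof.
move=> x y; have link_swap : link (x, y) = link (y, x).
  by apply/setP => v; rewrite !inE /= set3C12.
by rewrite /link_graph link_swap !inE /= eq_sym andbCA.
Qed.

Lemma link_graph_irr S : irreflexive (link_graph S).
Proof. by move=> x; rewrite /link_graph inE eqxx !andbF. Qed.

Lemma card_arcs_link_graph S :
  #|arcs_in (link_graph S) A| = #|[set p in ordered_pairs A | S \subset link p]|.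
Proof.
apply: eq_card => -[x y]; rewrite !inE /link_graph /= inE /=.
by case: (x \in A); case: (y \in A).
Qed.

Lemma exists_dense_link_graph (R : realType) (eta : R) d :
  0 < eta -> eta <= 1 -> (0 < d)%N ->
  4 * d%:R * expR d%:R / eta ^+ d <= #|A|%:R ->
  d%:R / eta <= #|B|%:R ->
  eta <= density R E A A B ->
  exists S : {set T}, [/\ S \subset B, #|S| = d &
    (2 * (2 * d) * #|A| < #|arcs_in (link_graph S) A|)%N].
Proof.
move=> eta_gt0 eta_le1 d_gt0 A_large B_large dense.
set t := Num.truncn (eta * #|B|%:R).
have n_large : 4 * d%:R * expR 1 ^+ d <= #|A|%:R * eta ^+ d.
  by rewrite -ler_pdivrMr ?exprn_gt0 // -expRM_natl mulr1.
have eta_m_ge0 : 0 <= eta * #|B|%:R by rewrite mulr_ge0 // ltW.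
have d_le_t : (d <= t)%N by rewrite /t truncn_ge_nat // mulrC -ler_pdivrMr.
have avg : (#|ordered_pairs A| * t <= \sum_(p in ordered_pairs A) #|link p|)%N.
  rewrite -(ler_nat R) natrM; apply: le_trans (density_link_sum dense).
  by rewrite ler_wpM2l // truncn_le.
have [S [SB cardS popular]] :=
  exists_popular_dset (leq_trans d_le_t (truncn_mul_le _ (ltW eta_gt0) eta_le1)) avg.
exists S; split => //; rewrite card_arcs_link_graph mulnA.
by apply: popular_pairs_gt n_large d_le_t _; rewrite // -card_ordered_pairs.
Qed.

Lemma tight_path_of_link_graph_path (S : {set T}) d x s :
  S \subset B -> #|S| = d -> size s = (2 * d).+1 -> uniq (x :: s) ->
  {subset x :: s <= A} -> path (link_graph S) x s ->
  exists a b : nat -> T,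
    (forall i, (i < 2 * d + 2)%N -> a i \in A) /\
    (forall j, (j < d)%N -> b j \in B) /\
    tight_path E (ab_pattern d a b).
Proof.
move=> SB cardS size_s uniq_xs xsA path_xs.
have enumSB : {subset enum S <= B} by move=> y; rewrite mem_enum; apply: fintype.subsetP.
exists (nth x (x :: s)), (nth x (enum S)); split; [|split].
- by move=> i i_lt; apply/xsA/mem_nth; rewrite /= size_s -addn2.
- by move=> j j_lt; apply/enumSB/mem_nth; rewrite -cardE cardS.
apply: tight_path_ab_pattern.
- have -> : (2 * d + 2)%N = size (x :: s) by rewrite /= size_s addn2.
  rewrite -[in mkseq _ d]cardS cardE !mkseq_nth cat_uniq uniq_xs enum_uniq andbT.
  by apply/hasPn => y /enumSB yB; apply/negP => /xsA yA; rewrite (disjointFr AB yA) in yB.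
move=> i j i_lt j_lt.
have /andP[_ /fintype.subsetP S_link] :
    link_graph S (nth x (x :: s) i) (nth x s i).
  by apply/(pathP x path_xs); rewrite size_s -[(2 * d).+1]addn1.
have : nth x (enum S) j \in link (nth x (x :: s) i, nth x s i).
  by apply/S_link; rewrite -mem_enum mem_nth // -cardE cardS.
by rewrite inE => /andP[].
Qed.

End Links.

Theorem lemma5p5 (R : realType) (eta : R) (d : nat) (T : finType)
  (E : {set {set T}}) (A B : {set T}) :
  0 < eta -> eta <= 1 -> (1 <= d)%N ->
  is_3graph E ->
  [disjoint A & B] ->
  4 * d%:R * expR d%:R / eta ^+ d <= #|A|%:R ->
  d%:R / eta <= #|B|%:R ->
  is_clique3 E A ->
  eta <= density R E A A B ->
  exists (a : nat -> T) (b : nat -> T),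
    (forall i, (i < 2 * d + 2)%N -> a i \in A) /\
    (forall j, (j < d)%N -> b j \in B) /\
    tight_path E (ab_pattern d a b).
Proof.
move=> eta_gt0 eta_le1 d_gt0 _ AB A_large B_large _ dense.
have [S [SB cardS many]] :=
  exists_dense_link_graph AB eta_gt0 eta_le1 d_gt0 A_large B_large dense.
have G_sym := @link_graph_sym T E A B S.
have [W [WA W_gt0 W_deg]] := exists_min_degree_subset G_sym many.
have [x [s [size_s uniq_xs xsW path_xs]]] := exists_path_in_min_degree_subset
  G_sym (@link_graph_irr T E A B S) W_gt0 W_deg (leqnn (2 * d).+1).
have xsA : {subset x :: s <= A} by move=> y /xsW; apply: fintype.subsetP.
exact: (tight_path_of_link_graph_path AB SB cardS size_s uniq_xs xsA path_xs).
Qed.
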